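(* Let $n\ge1$ and let $T\in\mathcal{L}(\mathcal{H})$ be an $n$-EP operator. Then: (1) if $M$ is a closed subspace of $\mathcal{H}$ reducing $T$, then the restriction $T|_M$ (as an operator on $M$) is $n$-EP; (2) if $S=U^*TU$ for some unitary $U\in\mathcal{L}(\mathcal{H})$, then $S$ is $n$-EP.
   Context: $\mathcal{H}$ is a Hilbert space, $\mathcal{L}(\mathcal{H})$ the bounded operators on it. A closed subspace $M$ reduces $T$ if $T(M)\subset M$ and $T^*(M)\subset M$. For $T$ with closed range, $T^\dagger$ is its Moore–Penrose inverse (unique solution of $TT^\dagger T=T$, $T^\dagger TT^\dagger=T^\dagger$, $(T^\dagger T)^*=T^\dagger T$, $(TT^\dagger)^*=TT^\dagger$). For $n\ge1$, $T$ is $n$-EP if $T$ has closed range and $T^nT^\dagger=T^\dagger T^n$. *)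

From HB Require Import structures.
From mathcomp Require Import all_boot all_order all_algebra.
From mathcomp Require Import reals.
From mathcomp Require Import complex.
Set Implicit Arguments. Unset Strict Implicit. Unset Printing Implicit Defensive.
Import Order.TTheory GRing.Theory Num.Theory.
Local Open Scope ring_scope.

(* Complex Hilbert space H : a C-vector space with an inner product ip
   (linear in the first argument, conjugate-linear in the second) whose
   induced norm is complete. *)
Section Hilbert.
Variable R : realType.
Variable H : lmodType R[i].
Variable ip : H -> H -> R[i].

Definition inner_product_axioms : Prop :=
  [/\ forall (a : R[i]) (x y z : H), ip (a *: x + y) z = a * ip x z + ip y z,
      forall x y : H, ip y x = (ip x y)^*,
      forall x : H, 0 <= ip x x
    & forall x : H, ip x x = 0 -> x = 0].

Definition hnorm (x : H) : R := Num.sqrt (complex.Re (ip x x)).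

Definition cauchy_seq (u : nat -> H) : Prop :=
  forall eps : R, 0 < eps -> exists N : nat,
    forall m k : nat, (N <= m)%N -> (N <= k)%N -> hnorm (u m - u k) < eps.

Definition converges_to (u : nat -> H) (l : H) : Prop :=
  forall eps : R, 0 < eps -> exists N : nat,
    forall m : nat, (N <= m)%N -> hnorm (u m - l) < eps.

Definition complete_space : Prop :=
  forall u : nat -> H, cauchy_seq u -> exists l : H, converges_to u l.

Definition hilbert_space : Prop := inner_product_axioms /\ complete_space.

Definition closed_set (A : H -> Prop) : Prop :=
  forall x : H, (forall eps : R, 0 < eps -> exists a : H, A a /\ hnorm (x - a) < eps) -> A x.

Definition linear_subspace (M : H -> Prop) : Prop :=
  M 0 /\ forall (a : R[i]) (x y : H), M x -> M y -> M (a *: x + y).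

Definition closed_subspace (M : H -> Prop) : Prop :=
  linear_subspace M /\ closed_set M.

(* Operators on a closed subspace M of H, represented by maps H -> H that
   leave M invariant; only their values on M matter. With M = the whole
   space this is exactly L(H). *)
Definition bounded_op_on (M : H -> Prop) (T : H -> H) : Prop :=
  [/\ forall x, M x -> M (T x),
      forall (a : R[i]) (x y : H), M x -> M y -> T (a *: x + y) = a *: T x + T y
    & exists c : R, forall x, M x -> hnorm (T x) <= c * hnorm x].

Definition whole : H -> Prop := fun _ => True.

Definition bounded_op (T : H -> H) : Prop := bounded_op_on whole T.

Definition is_adjoint (T S : H -> H) : Prop :=
  forall x y : H, ip (T x) y = ip x (S y).

Definition reduces (M : H -> Prop) (T : H -> H) : Prop :=
  (forall x, M x -> M (T x)) /\
  exists S : H -> H, is_adjoint T S /\ forall x, M x -> M (S x).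

Definition closed_range_on (M : H -> Prop) (T : H -> H) : Prop :=
  closed_set (fun y => exists x, M x /\ y = T x).

Definition selfadjoint_on (M : H -> Prop) (P : H -> H) : Prop :=
  forall x y, M x -> M y -> ip (P x) y = ip x (P y).

Definition MP_inverse_on (M : H -> Prop) (T X : H -> H) : Prop :=
  [/\ bounded_op_on M X,
      forall x, M x -> T (X (T x)) = T x,
      forall x, M x -> X (T (X x)) = X x,
      selfadjoint_on M (fun x => X (T x))
    & selfadjoint_on M (fun x => T (X x))].

(* T|_M is n-EP : closed range and T^n T^† = T^† T^n on M
   (T^† is unique, so "some MP inverse commutes" = "the MP inverse commutes") *)
Definition nEP_on (M : H -> Prop) (n : nat) (T : H -> H) : Prop :=
  closed_range_on M T /\
  exists X : H -> H, MP_inverse_on M T X /\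
    forall x, M x -> iter n T (X x) = X (iter n T x).

Definition nEP (n : nat) (T : H -> H) : Prop := nEP_on whole n T.

End Hilbert.

From HB Require Import structures.
From mathcomp Require Import all_boot all_order all_algebra.
From mathcomp Require Import reals classical_sets boolp complex.
From mathcomp Require Import lra ring.
Import Order.TTheory GRing.Theory Num.Theory.
Set Implicit Arguments. Unset Strict Implicit. Unset Printing Implicit Defensive.
Local Open Scope ring_scope.

(* The substance of (1) is that the Moore-Penrose inverse X of T leaves a
   reducing subspace M invariant; X then restricts to the Moore-Penrose inverse
   of T|_M, and the commutation and the closedness of the range restrict too.
   For x in M write X x = m + v with m in M and v orthogonal to M (projection
   theorem: m minimises the distance to M, and exists by completeness). As M
   reduces T, T v is orthogonal to M, while x - T X x is orthogonal to the range
   of T; pairing the latter with T v gives T v = 0, and then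
   <v, v> = <X T X x, v> = <X x, X T v> = 0.
   For (2), U^* X U is the Moore-Penrose inverse of U^* T U, and
   (U^* T U)^n = U^* T^n U. *)

Section RealFacts.
Variable R : realFieldType.

Lemma eq0_of_quadratic_ge0 (a c : R) :
  0 <= a -> (forall t, 2 * t * c <= t ^+ 2 * a) -> c = 0.
Proof.
move=> a0 hq; have a1 : 0 < a + 1 by lra.
have := hq (c / (a + 1)); rewrite -(ler_pM2l (exprn_gt0 2 a1)).
have -> : (a + 1) ^+ 2 * (2 * (c / (a + 1)) * c) = 2 * c ^+ 2 * (a + 1).
  by field; lra.
have -> : (a + 1) ^+ 2 * ((c / (a + 1)) ^+ 2 * a) = c ^+ 2 * a.
  by field; lra.
move=> hc; have c2 : c ^+ 2 <= 0 by nra.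
by apply/eqP; rewrite -sqrf_eq0 eq_le c2 sqr_ge0.
Qed.

Lemma ler_of_young_bounds (x d : R) : 0 <= d ->
  (forall t e, 0 < t -> 0 < e -> x <= (1 + t) * (d + e) + (1 + t^-1) * e) ->
  x <= d.
Proof.
move=> d0 hb; apply/ler_addgt0Pr => e e0.
pose t := e / (d + 1); have t0 : 0 < t by apply: divr_gt0; lra.
have td : (1 + t) * d <= d + e.
  by rewrite mulrDl mul1r lerD2l /t mulrAC ler_pdivrMr; nra.
apply: le_trans td.
apply/ler_addgt0Pr => f f0.
have k0 : 0 < 2 + t + t^-1 by have := invr_gt0 t; lra.
have := hb t (f / (2 + t + t^-1)) t0 (divr_gt0 f0 k0).
suff -> : (1 + t) * (d + f / (2 + t + t^-1)) + (1 + t^-1) * (f / (2 + t + t^-1))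
  = (1 + t) * d + f by [].
by field; apply/andP; split; apply: lt0r_neq0; nra.
Qed.

End RealFacts.

Lemma invS_lt (R : archiFieldType) (e : R) :
  0 < e -> exists N, forall k, (N <= k)%N -> k.+1%:R^-1 < e.
Proof.
move=> e0; exists (Num.bound e^-1) => k hk.
rewrite -[e]invrK ltf_pV2 ?posrE ?invr_gt0 ?ltr0Sn //.
have e'0 : 0 <= e^-1 by rewrite invr_ge0 ltW.
apply: lt_le_trans (archi_boundP e'0) _.
by rewrite ler_nat ltnW.
Qed.

Section InnerProduct.
Variable R : realType.
Variable H : lmodType R[i].
Variable ip : H -> H -> R[i].
Hypothesis hip : inner_product_axioms ip.

Lemma ipDl x y z : ip (x + y) z = ip x z + ip y z.
Proof. by case: hip => lin _ _ _; have := lin 1 x y z; rewrite scale1r mul1r. Qed.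

Lemma ip0l z : ip 0 z = 0.
Proof. by apply: (@addrI _ (ip 0 z)); rewrite -ipDl !addr0. Qed.

Lemma ipZl a x z : ip (a *: x) z = a * ip x z.
Proof. by case: hip => lin _ _ _; rewrite -[a *: x]addr0 lin ip0l addr0. Qed.

Lemma ipNl x z : ip (- x) z = - ip x z.
Proof. by rewrite -scaleN1r ipZl mulN1r. Qed.

Lemma ipBl x y z : ip (x - y) z = ip x z - ip y z.
Proof. by rewrite ipDl ipNl. Qed.

Lemma ipC x y : ip y x = (ip x y)^*.
Proof. by case: hip. Qed.

Lemma ipDr x y z : ip z (x + y) = ip z x + ip z y.
Proof. by rewrite [LHS]ipC ipDl rmorphD [ip z x]ipC [ip z y]ipC. Qed.

Lemma ip0r z : ip z 0 = 0.
Proof. by rewrite ipC ip0l conjC0. Qed.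

Lemma ipNr x z : ip z (- x) = - ip z x.
Proof. by rewrite [LHS]ipC ipNl rmorphN [ip z x]ipC. Qed.

Lemma ipBr x y z : ip z (x - y) = ip z x - ip z y.
Proof. by rewrite ipDr ipNr. Qed.

Lemma ipxx_eq0 x : ip x x = 0 -> x = 0.
Proof. by case: hip => _ _ _; apply. Qed.

Definition rip x y := complex.Re (ip x y).
Definition normsq x := rip x x.

Lemma hnormE x : hnorm ip x = Num.sqrt (normsq x).
Proof. by []. Qed.

Lemma normsq_ge0 x : 0 <= normsq x.
Proof. by case: hip => _ _ ge0 _; move: (ge0 x); rewrite lecE => /andP[]. Qed.

Lemma ripC x y : rip y x = rip x y.
Proof. by rewrite /rip ipC; case: (ip x y). Qed.

Lemma ripDl x y z : rip (x + y) z = rip x z + rip y z.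
Proof. by rewrite /rip ipDl; case: (ip x z); case: (ip y z). Qed.

Lemma ripNl x z : rip (- x) z = - rip x z.
Proof. by rewrite /rip ipNl; case: (ip x z). Qed.

Lemma ripZl (r : R) x z : rip (r%:C%C *: x) z = r * rip x z.
Proof. by rewrite /rip ipZl; case: (ip x z) => a b /=; rewrite mul0r subr0. Qed.

Lemma ripDr x y z : rip z (x + y) = rip z x + rip z y.
Proof. by rewrite ripC ripDl !(ripC z). Qed.

Lemma ripNr x z : rip z (- x) = - rip z x.
Proof. by rewrite ripC ripNl ripC. Qed.

Lemma ripZr (r : R) x z : rip z (r%:C%C *: x) = r * rip z x.
Proof. by rewrite ripC ripZl ripC. Qed.

Lemma normsqD x y : normsq (x + y) = normsq x + 2 * rip x y + normsq y.
Proof. by rewrite /normsq ripDl !ripDr (ripC y x); ring. Qed.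

Lemma normsqN x : normsq (- x) = normsq x.
Proof. by rewrite /normsq ripNl ripNr opprK. Qed.

Lemma normsqB x y : normsq (x - y) = normsq x - 2 * rip x y + normsq y.
Proof. by rewrite normsqD ripNr normsqN; ring. Qed.

Lemma normsqZ (r : R) x : normsq (r%:C%C *: x) = r ^+ 2 * normsq x.
Proof. by rewrite /normsq ripZl ripZr; ring. Qed.

Lemma normsq_distC x y : normsq (x - y) = normsq (y - x).
Proof. by rewrite -normsqN opprB. Qed.

Lemma hnorm_ltE x e : 0 < e -> (hnorm ip x < e) = (normsq x < e ^+ 2).
Proof.
by move=> e0; rewrite hnormE -[e in LHS]gtr0_norm // -sqrtr_sqr ltr_sqrt ?exprn_gt0.
Qed.

Lemma normsq_parallelogram x y :
  normsq (x + y) + normsq (x - y) = 2 * normsq x + 2 * normsq y.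
Proof. by rewrite normsqD normsqB; ring. Qed.

Lemma normsqD_le x y t : 0 < t ->
  normsq (x + y) <= (1 + t) * normsq x + (1 + t^-1) * normsq y.
Proof.
move=> t0; have := normsq_ge0 (t%:C%C *: x - y).
rewrite normsqB normsqZ ripZl normsqD => h.
suff : 2 * rip x y <= t * normsq x + t^-1 * normsq y by lra.
rewrite -(ler_pM2l t0); have -> : t * (t * normsq x + t^-1 * normsq y)
  = t ^+ 2 * normsq x + normsq y by field; rewrite gt_eqF.
lra.
Qed.

Lemma ip_eq0_of_rip x y : rip x y = 0 -> rip ('i%C *: x) y = 0 -> ip x y = 0.
Proof.
rewrite /rip ipZl; case: (ip x y) => a b /= -> .
by rewrite !mul0r mul1r sub0r => /eqP; rewrite oppr_eq0 => /eqP ->.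
Qed.

End InnerProduct.

Section Subspace.
Variable R : realType.
Variable H : lmodType R[i].
Variable M : H -> Prop.
Hypothesis hM : linear_subspace M.

Lemma subspace0 : M 0.
Proof. by case: hM. Qed.

Lemma subspaceD x y : M x -> M y -> M (x + y).
Proof. by case: hM => _ h hx hy; have := h 1 _ _ hx hy; rewrite scale1r. Qed.

Lemma subspaceZ a x : M x -> M (a *: x).
Proof. by case: hM => _ h hx; have := h a _ _ hx subspace0; rewrite addr0. Qed.

Lemma subspaceB x y : M x -> M y -> M (x - y).
Proof. by move=> hx hy; rewrite -scaleN1r; apply: subspaceD => //; apply: subspaceZ. Qed.

End Subspace.

Section Projection.
Variable R : realType.
Variable H : lmodType R[i].
Variable ip : H -> H -> R[i].
Hypothesis hip : inner_product_axioms ip.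

Local Notation normsq := (normsq ip).
Local Notation rip := (rip ip).

Lemma closed_set_limit (A : H -> Prop) u l :
  closed_set ip A -> (forall k, A (u k)) -> converges_to ip u l -> A l.
Proof.
move=> hA hu hl; apply: hA => e e0; have [N hN] := hl e e0.
by exists (u N); split => //; rewrite hnormE -normsq_distC -?hnormE //; apply: hN.
Qed.

Lemma cauchy_seq_normsq (u : nat -> H) :
  (forall e, 0 < e -> exists N, forall j k, (N <= j)%N -> (N <= k)%N ->
     normsq (u j - u k) < e) -> cauchy_seq ip u.
Proof.
move=> hu e e0; have [N hN] := hu _ (exprn_gt0 2 e0).
by exists N => j k hj hk; rewrite hnorm_ltE //; apply: hN.
Qed.

Lemma normsq_limit_le (u : nat -> H) l w d : 0 <= d -> converges_to ip u l ->
  (forall e, 0 < e -> exists N, forall k, (N <= k)%N -> normsq (w - u k) < d + e) ->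
  normsq (w - l) <= d.
Proof.
move=> d0 hl hu; apply: ler_of_young_bounds => // t e t0 e0.
have [N1 hN1] := hu e e0.
have s0 : 0 < Num.sqrt e by rewrite sqrtr_gt0.
have [N2 hN2] := hl _ s0.
pose k := maxn N1 N2.
have hw := hN1 k (leq_maxl _ _).
have hkl := hN2 k (leq_maxr _ _).
rewrite hnorm_ltE // sqr_sqrtr ?ltW // in hkl.
have -> : w - l = (w - u k) + (u k - l) by rewrite addrA subrK.
apply: le_trans (normsqD_le hip _ _ t0) _.
apply: lerD; rewrite ler_pM2l ?ltW //; first by lra.
by have := invr_gt0 t; lra.
Qed.

Variable M : H -> Prop.
Hypothesis hM : linear_subspace M.

Lemma normsqB_le_dist w d y z :
  (forall x, M x -> d <= normsq (w - x)) -> M y -> M z ->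
  normsq (y - z) <= 2 * normsq (w - y) + 2 * normsq (w - z) - 4 * d.
Proof.
move=> hd hy hz.
(* parallelogram law for w - y and w - z, whose half-sum is w - mid *)
pose mid := (2^-1 : R)%:C%C *: (y + z).
have := hd mid (subspaceZ hM _ (subspaceD hM hy hz)).
have hsum : (w - y) + (w - z) = (2 : R)%:C%C *: (w - mid).
  rewrite /mid scalerBr scalerA -rmorphM mulfV ?pnatr_eq0 // rmorph1 scale1r.
  rewrite -[2]/(1 + 1 : R) rmorphD rmorph1 scalerDl scale1r opprD !addrA.
  by congr (_ - _); rewrite addrAC.
have := normsq_parallelogram hip (w - y) (w - z).
have -> : w - y - (w - z) = z - y by rewrite opprB addrC addrA subrK.
by rewrite hsum (normsqZ hip) (normsq_distC hip z); lra.
Qed.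

Lemma minimizer_orthogonal w m : M m ->
  (forall y, M y -> normsq (w - m) <= normsq (w - y)) ->
  forall z, M z -> ip z (w - m) = 0.
Proof.
move=> hm hmin.
have rip0 : forall z, M z -> rip (w - m) z = 0.
  move=> z hz; apply: (eq0_of_quadratic_ge0 (normsq_ge0 hip z)) => t.
  have := hmin _ (subspaceD hM hm (subspaceZ hM t%:C%C hz)).
  rewrite opprD addrA [normsq (_ - _ *: z)](normsqB hip) (normsqZ hip) (ripZr hip).
  lra.
move=> z hz; apply: ip_eq0_of_rip => //; rewrite ripC //; apply: rip0 => //.
exact: subspaceZ.
Qed.

Hypothesis hc : complete_space ip.
Hypothesis hMc : closed_set ip M.

Lemma dist_attained w :
  exists2 m, M m & forall y, M y -> normsq (w - m) <= normsq (w - y).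
Proof.
pose E : set R := fun r => exists2 y, M y & r = normsq (w - y).
have E_lb : has_lbound E by exists 0 => r [y _ ->]; apply: normsq_ge0.
have E_ne : nonempty E by exists (normsq (w - 0)), 0; first exact: subspace0.
pose d := inf E.
have hd : forall y, M y -> d <= normsq (w - y).
  by move=> y hy; apply: ge_inf => //; exists y.
have d0 : 0 <= d by apply: lb_le_inf => // r [y _ ->]; apply: normsq_ge0.
have /choice[u hu] : forall k, exists y, M y /\ normsq (w - y) < d + k.+1%:R^-1.
  move=> k; have : d < d + k.+1%:R^-1 by rewrite ltrDl invr_gt0 ltr0Sn.
  by case/(inf_lt E_ne) => r [y hy ->]; exists y.
have u_approx : forall e, 0 < e ->
    exists N, forall k, (N <= k)%N -> normsq (w - u k) < d + e.
  move=> e e0; have [N hN] := invS_lt e0; exists N => k hk.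
  by apply: lt_trans (hu k).2 _; rewrite ltrD2l hN.
have [m hum] : exists m, converges_to ip u m.
  apply/hc/cauchy_seq_normsq => e e0.
  have [N hN] := u_approx (e / 4) (divr_gt0 e0 (ltr0Sn _ 3)).
  exists N => j k hj hk.
  have := normsqB_le_dist hd (hu j).1 (hu k).1.
  have := hN j hj; have := hN k hk; lra.
exists m; first exact: (closed_set_limit hMc (fun k => (hu k).1) hum).
by move=> y hy; apply: le_trans (hd y hy); apply: normsq_limit_le u_approx.
Qed.

Lemma orthogonal_decomposition w : exists2 m, M m & forall z, M z -> ip z (w - m) = 0.
Proof.
by have [m hm hmin] := dist_attained w; exists m => //; apply: minimizer_orthogonal.
Qed.

End Projection.

Section Operators.
Variable R : realType.
Variable H : lmodType R[i].
Variable ip : H -> H -> R[i].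

Lemma bounded_op0 f : bounded_op ip f -> f 0 = 0.
Proof.
case=> _ lin _; apply: (@addrI _ (f 0)); rewrite addr0.
by have := lin 1 0 0 I I; rewrite !scale1r addr0.
Qed.

Lemma bounded_opD f : bounded_op ip f -> {morph f : x y / x + y}.
Proof. by case=> _ lin _ x y; have := lin 1 x y I I; rewrite !scale1r. Qed.

Lemma bounded_opB f : bounded_op ip f -> {morph f : x y / x - y}.
Proof.
case=> _ lin _ x y; have := lin (-1) y x I I; rewrite !scaleN1r => fB.
by rewrite [x - y]addrC fB addrC.
Qed.

Lemma bounded_op_on_sub (M N : H -> Prop) f : (forall x, N x -> M x) ->
  (forall x, N x -> N (f x)) -> bounded_op_on ip M f -> bounded_op_on ip N f.
Proof.
move=> NM fN [_ lin [c hc]]; split => //.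
- by move=> a x y /NM hx /NM hy; apply: lin.
- by exists c => x /NM; apply: hc.
Qed.

Lemma MP_inverse_on_sub (M N : H -> Prop) T X : (forall x, N x -> M x) ->
  (forall x, N x -> N (X x)) -> MP_inverse_on ip M T X -> MP_inverse_on ip N T X.
Proof.
move=> NM XN [hX TXT XTX sa1 sa2]; split.
- exact: bounded_op_on_sub hX.
- by move=> x /NM; apply: TXT.
- by move=> x /NM; apply: XTX.
- by move=> x y /NM hx /NM hy; apply: sa1.
- by move=> x y /NM hx /NM hy; apply: sa2.
Qed.

End Operators.

Section ReducingSubspace.
Variable R : realType.
Variable H : lmodType R[i].
Variable ip : H -> H -> R[i].
Hypothesis hip : inner_product_axioms ip.
Variables T X : H -> H.
Hypothesis hT : bounded_op ip T.
Hypothesis hX : MP_inverse_on ip (@whole R H) T X.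

Lemma MP_residual_orthogonal z x : ip (T z) (x - T (X x)) = 0.
Proof.
case: hX => hXb TXT XTX _ sa2.
rewrite -(TXT z I) (sa2 _ _ I I) (bounded_opB hXb) (bounded_opB hT).
by rewrite (XTX x I) subrr ip0r.
Qed.

Variable M : H -> Prop.
Hypothesis hM : closed_subspace ip M.
Hypothesis hMT : reduces ip M T.

Lemma MP_inverse_reducing : complete_space ip -> forall x, M x -> M (X x).
Proof.
move=> hc x hx; have [Mlin Mcl] := hM.
case: hX => hXb _ XTX sa1 _; case: hMT => TM [S [hS SM]].
have [m hm hperp] := orthogonal_decomposition hip Mlin hc Mcl (X x).
set v := X x - m.
suff v0 : v = 0 by rewrite -[X x](subrK m) -/v v0 add0r.
have Tv_perp y : M y -> ip y (T v) = 0.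
  by move=> hy; rewrite ipC // hS ipC // conjCK; apply/hperp/SM.
have Tv0 : T v = 0.
  have resid : x - T (X x) = (x - T m) - T v.
    by rewrite -[X x](subrK m) -/v (bounded_opD hT) opprD addrA addrAC.
  have := MP_residual_orthogonal v x.
  rewrite resid ipBr // [ip (T v) _]ipC // Tv_perp ?conjC0 ?sub0r.
    by move/eqP; rewrite oppr_eq0 => /eqP /(ipxx_eq0 hip).
  exact: (subspaceB Mlin hx (TM m hm)).
apply: (ipxx_eq0 hip); rewrite {1}/v ipBl // (hperp m hm) subr0.
by rewrite -(XTX x I) (sa1 _ _ I I) Tv0 (bounded_op0 hXb) ip0r.
Qed.

Lemma closed_range_reducing : (forall x, M x -> M (X x)) ->
  closed_range_on ip (@whole R H) T -> closed_range_on ip M T.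
Proof.
move=> XM hcr y hy; have [_ Mcl] := hM; have [TM _] := hMT.
have My : M y.
  apply: Mcl => e e0; have [_ [[x [hx ->]] he]] := hy e e0.
  by exists (T x); split => //; apply: TM.
have [x [_ yx]] : exists x, whole x /\ y = T x.
  apply: hcr => e e0; have [_ [[x [_ ->]] he]] := hy e e0.
  by exists (T x); split => //; exists x.
case: hX => _ TXT _ _ _.
by exists (X y); split; [apply: XM | rewrite yx TXT].
Qed.

End ReducingSubspace.

Lemma nEP_on_reducing (R : realType) (H : lmodType R[i]) (ip : H -> H -> R[i])
  (M : H -> Prop) n T : inner_product_axioms ip -> complete_space ip ->
  bounded_op ip T -> closed_subspace ip M -> reduces ip M T ->
  nEP ip n T -> nEP_on ip M n T.
Proof.
move=> hip hc hT hM hMT [hcr [X [hX hcomm]]].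
have XM := MP_inverse_reducing hip hT hX hM hMT hc.
split; first exact: (closed_range_reducing hX hM hMT XM hcr).
exists X; split; last by move=> x _; apply: hcomm.
exact: MP_inverse_on_sub XM hX.
Qed.

Section UnitaryConjugation.
Variable R : realType.
Variable H : lmodType R[i].
Variable ip : H -> H -> R[i].
Hypothesis hip : inner_product_axioms ip.
Variables U Us : H -> H.
Hypothesis hU : bounded_op ip U.
Hypothesis hUs : is_adjoint ip U Us.
Hypothesis UK : cancel U Us.
Hypothesis UsK : cancel Us U.

Local Notation conj A := (fun x => Us (A (U x))).

Lemma ip_adjointl x y : ip (Us x) y = ip x (U y).
Proof. by rewrite ipC // -hUs -ipC. Qed.

Lemma hnorm_unitary x : hnorm ip (U x) = hnorm ip x.
Proof. by rewrite !hnormE /normsq /rip hUs UK. Qed.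

Lemma hnorm_unitary_adjoint x : hnorm ip (Us x) = hnorm ip x.
Proof. by rewrite -hnorm_unitary UsK. Qed.

Lemma bounded_op_conj A : bounded_op ip A -> bounded_op ip (conj A).
Proof.
case: hU => _ Ulin _ [_ Alin [c hc]]; split => //.
- move=> a x y _ _; rewrite Ulin // Alin //; apply: (can_inj UK).
  by rewrite UsK Ulin // !UsK.
- by exists c => x _; rewrite hnorm_unitary_adjoint -(hnorm_unitary x); apply: hc.
Qed.

Lemma iter_conj A k x : iter k (conj A) x = Us (iter k A (U x)).
Proof. by elim: k x => [|k IHk] x /=; rewrite ?UK // IHk UsK. Qed.

Lemma closed_range_conj A :
  closed_range_on ip (@whole R H) A -> closed_range_on ip (@whole R H) (conj A).
Proof.
move=> hcr y hy.
have [x [_ Uyx]] : exists x, whole x /\ U y = A x.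
  apply: hcr => e e0; have [_ [[x [_ ->]] he]] := hy e e0.
  exists (A (U x)); split; first by exists (U x).
  by rewrite -[A (U x)]UsK -(bounded_opB hU) hnorm_unitary.
by exists (Us x); split => //; rewrite UsK -Uyx UK.
Qed.

Lemma MP_inverse_conj A X : MP_inverse_on ip (@whole R H) A X ->
  MP_inverse_on ip (@whole R H) (conj A) (conj X).
Proof.
case=> hX AXA XAX sa1 sa2; split => /=.
- exact: bounded_op_conj.
- by move=> x _; rewrite !UsK AXA.
- by move=> x _; rewrite !UsK XAX.
- by move=> x y _ _; rewrite UsK ip_adjointl (sa1 _ _ I I) hUs UsK.
- by move=> x y _ _; rewrite UsK ip_adjointl (sa2 _ _ I I) hUs UsK.
Qed.

Lemma nEP_conj n A : nEP ip n A -> nEP ip n (conj A).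
Proof.
case=> hcr [X [hX hcomm]]; split; first exact: closed_range_conj.
exists (conj X); split; first exact: MP_inverse_conj.
by move=> x _; rewrite !(iter_conj A) !UsK hcomm.
Qed.

End UnitaryConjugation.

Theorem mainTheorem7 (R : realType) (H : lmodType R[i]) (ip : H -> H -> R[i])
  (hH : hilbert_space ip) (n : nat) (hn : (1 <= n)%N) (T : H -> H)
  (hT : bounded_op ip T) (hEP : nEP ip n T) :
  (forall M : H -> Prop, closed_subspace ip M -> reduces ip M T ->
      nEP_on ip M n T)
  /\
  (forall U Ustar : H -> H, bounded_op ip U -> is_adjoint ip U Ustar ->
      (forall x, Ustar (U x) = x) -> (forall x, U (Ustar x) = x) ->
      nEP ip n (fun x => Ustar (T (U x)))).
Proof.
(* the argument works for every n *)
have [hip hc] := hH.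
split=> [M hM hMT | U Us hU hUs UK UsK].
  exact: (nEP_on_reducing hip hc hT hM hMT hEP).
exact: (nEP_conj hip hU hUs UK UsK hEP).
Qed.
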